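(* Consider the semi-discrete system $\frac{d\mathbf{u}}{dt}=\mathbf{R}(\mathbf{u})+\mathbf{B}(t)\mathbf{u}$ and the integrating-factor third-order SSPRK scheme $\mathbf{u}^{(1)}=e^{\mathbf{C}(t_n,\Delta t)}[\mathbf{u}^n+\Delta t\,\mathbf{R}(\mathbf{u}^n)]$, $\mathbf{u}^{(2)}=\tfrac34 e^{\mathbf{C}(t_n,\Delta t/2)}\mathbf{u}^n+\tfrac14 e^{-\mathbf{C}(t_n+\Delta t/2,\Delta t/2)}[\mathbf{u}^{(1)}+\Delta t\,\mathbf{R}(\mathbf{u}^{(1)})]$, $\mathbf{u}^{n+1}=\tfrac13 e^{\mathbf{C}(t_n,\Delta t)}\mathbf{u}^n+\tfrac23 e^{\mathbf{C}(t_n+\Delta t/2,\Delta t/2)}[\mathbf{u}^{(2)}+\Delta t\,\mathbf{R}(\mathbf{u}^{(2)})]$ (which, when $\mathbf{B}$ is independent of $t$, reads with $e^{\mathbf{C}(t,\tau)}=e^{\tau\mathbf{B}}$). Assume the forward Euler scheme is positivity preserving, i.e. $\mathbf{u}\in\mathbb{U}_{\mathrm{ad}}$ implies $\mathbf{u}+\Delta t\,\mathbf{R}(\mathbf{u})\in\mathbb{U}_{\mathrm{ad}}$ for any $\Delta t\le\Delta t^*(\mathbf{u})$. Then this third-order SSPRK scheme is positivity preserving under the same restriction on the time step: if $\mathbf{u}^n\in\mathbb{U}_{\mathrm{ad}}$ and $\Delta t$ satisfies the forward Euler restriction at each stage, then $\mathbf{u}^{n+1}\in\mathbb{U}_{\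mathrm{ad}}$.
   Context: Ten-Moment equations in 2-D: conservative variable per grid point $\mathbf{u}=(\rho,\rho v_1,\rho v_2,E_{11},E_{12},E_{22})^\top$, pressure tensor $p_{11}=2E_{11}-\rho v_1^2$, $p_{12}=2E_{12}-\rho v_1v_2$, $p_{22}=2E_{22}-\rho v_2^2$. $\mathbb{U}_{\mathrm{ad}}=\{\mathbf{u}\in\mathbb{R}^6:\rho>0,\ \mathbf{p}\text{ positive definite}\}$; a vector of grid values is said to lie in $\mathbb{U}_{\mathrm{ad}}$ if the state at every grid point does. $\mathbf{R}$ is the spatial (finite difference) discretization of $-\partial_x\mathbf{f}-\partial_y\mathbf{g}$. The source is $\mathbf{B}(t)\mathbf{u}$ applied pointwise, with $\mathbf{B}(t)$ the $6\times6$ matrix whose only nonzero entries are $B_{21}=a$, $B_{31}=b$, $B_{42}=a$, $B_{52}=b/2$, $B_{53}=a/2$, $B_{63}=b$, where $a(t)=-\frac12\partial_xW$, $b(t)=-\frac12\partial_yW$ for a given potential $W(x,y,t)$ (evaluated at the grid point). $\mathbf{C}(t,\tau)=\int_t^{t+\tau}\mathbf{B}(s)\,ds$, and with $\hat a=\int_t^{t+\tau}a$, $\hat b=\int_t^{t+\tau}b$, $e^{\mathbf{C}(t,\tau)}$ is the lower-triangular matrix with unit diagonal and entries $(2,1)=\hat a$, $(3,1)=\hat b$, $(4,1)=\hat a^2/2$, $(4,2)=\hat a$, $(5,1)=\hat a\hat b/2$, $(5,2)=\hat b/2$, $(5,3)=\hat a/2$, $(6,1)=\hat b^2/2$, $(6,3)=\hat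 b$, all other entries zero. *)

From HB Require Import structures.
From mathcomp Require Import all_boot all_order all_algebra.
From mathcomp Require Import all_classical all_reals all_analysis.
Set Implicit Arguments. Unset Strict Implicit. Unset Printing Implicit Defensive.
Import Order.TTheory GRing.Theory Num.Theory.
Import numFieldNormedType.Exports.
Local Open Scope classical_set_scope.
Local Open Scope ring_scope.

Section TenMoment.
Variable R : realType.

Definition st_rho (u : 'cV[R]_6) := u (inord 0) 0.
Definition st_m1  (u : 'cV[R]_6) := u (inord 1) 0.
Definition st_m2  (u : 'cV[R]_6) := u (inord 2) 0.
Definition st_E11 (u : 'cV[R]_6) := u (inord 3) 0.
Definition st_E12 (u : 'cV[R]_6) := u (inord 4) 0.
Definition st_E22 (u : 'cV[R]_6) := u (inord 5) 0.

Definition vel1 u := st_m1 u / st_rho u.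
Definition vel2 u := st_m2 u / st_rho u.

Definition p11 u := 2 * st_E11 u - st_rho u * vel1 u ^+ 2.
Definition p12 u := 2 * st_E12 u - st_rho u * vel1 u * vel2 u.
Definition p22 u := 2 * st_E22 u - st_rho u * vel2 u ^+ 2.

Definition ptensor (u : 'cV[R]_6) : 'M[R]_2 :=
  \matrix_(i < 2, j < 2)
    if (i == j :> nat) then (if (i == 0%N :> nat) then p11 u else p22 u)
    else p12 u.

Definition posdef (P : 'M[R]_2) : Prop :=
  forall v : 'cV[R]_2, v != 0 -> 0 < (v^T *m P *m v) 0 0.

Definition Uad_pt (u : 'cV[R]_6) : Prop := 0 < st_rho u /\ posdef (ptensor u).

Definition Uad (G : finType) (U : G -> 'cV[R]_6) : Prop := forall g, Uad_pt (U g).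

(* e^{C} as a function of ahat = int a, bhat = int b (explicit lower-triangular matrix) *)
Definition expC_entry (ah bh : R) (i j : nat) : R :=
  if (i == j)%N then 1 else
  match i, j with
  | 1, 0 => ah
  | 2, 0 => bh
  | 3, 0 => ah ^+ 2 / 2
  | 3, 1 => ah
  | 4, 0 => ah * bh / 2
  | 4, 1 => bh / 2
  | 4, 2 => ah / 2
  | 5, 0 => bh ^+ 2 / 2
  | 5, 2 => bh
  | _, _ => 0
  end.

Definition expCmat (ah bh : R) : 'M[R]_6 :=
  \matrix_(i < 6, j < 6) expC_entry ah bh i j.

Definition coef_a (W : R -> R -> R -> R) (x y t : R) : R :=
  - (1/2) * derive1 (fun z => W z y t) x.
Definition coef_b (W : R -> R -> R -> R) (x y t : R) : R :=
  - (1/2) * derive1 (fun z => W x z t) y.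

Definition ahat W x y t tau : R :=
  Rintegral lebesgue_measure `[t, t + tau] (fun s => coef_a W x y s).
Definition bhat W x y t tau : R :=
  Rintegral lebesgue_measure `[t, t + tau] (fun s => coef_b W x y s).

Variable G : finType.
Variables (xg yg : G -> R) (W : R -> R -> R -> R).

(* e^{C(t,tau)} applied pointwise; since C is linear in (ahat,bhat),
   e^{-C(t,tau)} is expCmat (-ahat) (-bhat). *)
Definition applyExpC (t tau : R) (U : G -> 'cV[R]_6) : G -> 'cV[R]_6 :=
  fun g => expCmat (ahat W (xg g) (yg g) t tau) (bhat W (xg g) (yg g) t tau) *m U g.
Definition applyExpCneg (t tau : R) (U : G -> 'cV[R]_6) : G -> 'cV[R]_6 :=
  fun g => expCmat (- ahat W (xg g) (yg g) t tau) (- bhat W (xg g) (yg g) t tau) *m U g.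

Variable Rh : (G -> 'cV[R]_6) -> (G -> 'cV[R]_6).

Definition euler (dt : R) (U : G -> 'cV[R]_6) : G -> 'cV[R]_6 :=
  fun g => U g + dt *: Rh U g.

Definition stage1 (tn dt : R) U := applyExpC tn dt (euler dt U).
Definition stage2 (tn dt : R) U : G -> 'cV[R]_6 :=
  fun g => (3/4) *: applyExpC tn (dt/2) U g
         + (1/4) *: applyExpCneg (tn + dt/2) (dt/2) (euler dt (stage1 tn dt U)) g.
Definition ssprk3 (tn dt : R) U : G -> 'cV[R]_6 :=
  fun g => (1/3) *: applyExpC tn dt U g
         + (2/3) *: applyExpC (tn + dt/2) (dt/2) (euler dt (stage2 tn dt U)) g.

End TenMoment.

From HB Require Import structures.
From mathcomp Require Import all_boot all_order all_algebra.
From mathcomp Require Import all_classical all_reals all_analysis.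
From mathcomp Require Import ring lra.
Import Order.TTheory GRing.Theory Num.Theory.
Local Open Scope ring_scope.

(* A state u lies in U_ad iff the symmetric moment matrix
     [[rho, rho v1, rho v2], [rho v1, 2 E11, 2 E12], [rho v2, 2 E12, 2 E22]]
   is positive definite: its Schur complement with respect to rho is the
   pressure tensor.  Positive definite matrices form a convex cone, and e^C
   acts on the moment matrix by congruence with the invertible substitution
   (z, x, y) |-> (z + ahat x + bhat y, x, y), so it preserves U_ad.  Every
   stage of the scheme is a positive combination of images under e^C of
   states in U_ad and of forward Euler steps, hence lies in U_ad. *)

Lemma col2_neq0 (V : nmodType) (v : 'cV[V]_2) : (v != 0) = (v 0 0 != 0) || (v 1 0 != 0).
Proof.
rewrite -negb_and; congr negb.
apply/eqP/andP => [-> | [/eqP v0 /eqP v1]]; first by rewrite !mxE.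
apply/matrixP => i j; rewrite ord1 mxE.
have [->|->] : i = 0 \/ i = 1 by case: i => [[|[|//]]] ?; [left | right]; apply/val_inj.
- exact: v0.
- exact: v1.
Qed.

Lemma sum_ord6 (V : nmodType) (F : 'I_6 -> V) : \sum_(j < 6) F j =
  F (inord 0) + F (inord 1) + F (inord 2) + F (inord 3) + F (inord 4) + F (inord 5).
Proof.
rewrite !big_ord_recl big_ord0 addr0 !addrA.
by congr (_ + _ + _ + _ + _ + _); congr F; apply/val_inj; rewrite /= inordK.
Qed.

Section MomentForm.
Variable R : realType.
Implicit Types (u w : 'cV[R]_6) (a b x y z : R).

Definition moment_form u z x y : R :=
  st_rho u * z ^+ 2 + 2 * z * (st_m1 u * x + st_m2 u * y)
  + 2 * (st_E11 u * x ^+ 2 + 2 * st_E12 u * x * y + st_E22 u * y ^+ 2).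

Definition moment_posdef u : Prop :=
  forall z x y, [|| z != 0, x != 0 | y != 0] -> 0 < moment_form u z x y.

Definition pressure_form u x y : R :=
  p11 u * x ^+ 2 + 2 * p12 u * x * y + p22 u * y ^+ 2.

Lemma ptensor_formE u (v : 'cV[R]_2) :
  (v^T *m ptensor u *m v) 0 0 = pressure_form u (v 0 0) (v 1 0).
Proof.
have -> : (0 : 'I_2) = ord0 by apply/val_inj.
have -> : (1 : 'I_2) = lift ord0 ord0 by apply/val_inj.
rewrite !mxE !big_ord_recl !big_ord0 !mxE !big_ord_recl !big_ord0 !mxE /=.
by rewrite /pressure_form; ring.
Qed.

Lemma posdef_ptensorP u :
  posdef (ptensor u) <->
  (forall x y, (x != 0) || (y != 0) -> 0 < pressure_form u x y).
Proof.
split=> [hP x y nz | hQ v].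
- pose v : 'cV[R]_2 := \col_i (if i == 0 then x else y).
  have -> : x = v 0 0 by rewrite mxE.
  have -> : y = v 1 0 by rewrite mxE.
  by rewrite -ptensor_formE hP // col2_neq0 !mxE.
- by rewrite col2_neq0 ptensor_formE; apply: hQ.
Qed.

Lemma mul_rho_moment_form u z x y : st_rho u != 0 ->
  st_rho u * moment_form u z x y
  = (st_rho u * z + st_m1 u * x + st_m2 u * y) ^+ 2 + st_rho u * pressure_form u x y.
Proof.
move=> rho_neq0; rewrite /moment_form /pressure_form /p11 /p12 /p22 /vel1 /vel2.
by field.
Qed.

Lemma Uad_ptP u : Uad_pt u <-> moment_posdef u.
Proof.
split=> [[rho_gt0 /posdef_ptensorP hQ] z x y | hF].
  have rho_neq0 : st_rho u != 0 by rewrite gt_eqF.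
  have [xy_nz _ | ] := boolP ((x != 0) || (y != 0)).
    rewrite -(pmulr_rgt0 _ rho_gt0) mul_rho_moment_form //.
    by rewrite ltr_wpDl ?sqr_ge0 ?mulr_gt0 ?hQ.
  rewrite negb_or !negbK => /andP[/eqP-> /eqP->]; rewrite orbF => z_nz.
  by rewrite /moment_form !(mulr0, expr0n, addr0) mulr_gt0 // exprn_even_gt0.
have rho_gt0 : 0 < st_rho u.
  have := hF 1 0 0; rewrite oner_eq0 /moment_form => /(_ isT).
  by rewrite !(mulr0, expr0n, addr0, expr1n, mulr1).
split=> //; apply/posdef_ptensorP => x y xy_nz.
have rho_neq0 : st_rho u != 0 by rewrite gt_eqF.
pose z := - (st_m1 u * x + st_m2 u * y) / st_rho u.
have := mul_rho_moment_form u z x y rho_neq0.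
have -> : st_rho u * z + st_m1 u * x + st_m2 u * y = 0 by rewrite /z; field.
rewrite expr0n /= add0r -(pmulr_rgt0 _ rho_gt0) => <-.
by rewrite mulr_gt0 // hF // xy_nz orbT.
Qed.

Lemma moment_form_scale_add a b u w z x y :
  moment_form (a *: u + b *: w) z x y
  = a * moment_form u z x y + b * moment_form w z x y.
Proof.
by rewrite /moment_form /st_rho /st_m1 /st_m2 /st_E11 /st_E12 /st_E22 !mxE; ring.
Qed.

Lemma moment_posdef_scale_add a b u w : 0 < a -> 0 < b ->
  moment_posdef u -> moment_posdef w -> moment_posdef (a *: u + b *: w).
Proof.
move=> a_gt0 b_gt0 hu hw z x y nz.
by rewrite moment_form_scale_add addr_gt0 ?mulr_gt0 ?hu ?hw.
Qed.

Lemma expCmat_mulE a b u (k : nat) : (k < 6)%N ->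
  (expCmat a b *m u) (inord k) 0 = \sum_(j < 6) expC_entry a b k j * u j 0.
Proof. by move=> k_lt6; rewrite !mxE; apply: eq_bigr => j _; rewrite !mxE inordK. Qed.

Lemma moment_form_expC a b u z x y :
  moment_form (expCmat a b *m u) z x y = moment_form u (z + a * x + b * y) x y.
Proof.
rewrite /moment_form /st_rho /st_m1 /st_m2 /st_E11 /st_E12 /st_E22.
by rewrite !expCmat_mulE // !sum_ord6 /expC_entry !inordK //=; field.
Qed.

Lemma moment_posdef_expC a b u : moment_posdef u -> moment_posdef (expCmat a b *m u).
Proof.
move=> hu z x y nz; rewrite moment_form_expC; apply: hu.
case/orP: nz => [z_nz | ->]; last by rewrite orbT.
have [_ | ] := boolP ((x != 0) || (y != 0)); first by rewrite orbT.
by rewrite negb_or !negbK => /andP[/eqP-> /eqP->]; rewrite !mulr0 !addr0 z_nz.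
Qed.

End MomentForm.

Section GridStates.
Variables (R : realType) (G : finType).
Implicit Types U V : G -> 'cV[R]_6.

Lemma Uad_scale_add (a b : R) U V : 0 < a -> 0 < b -> Uad U -> Uad V ->
  Uad (fun g => a *: U g + b *: V g).
Proof.
move=> a_gt0 b_gt0 hU hV g.
by apply/Uad_ptP/moment_posdef_scale_add => //; apply/Uad_ptP.
Qed.

Lemma Uad_expCmat (ah bh : G -> R) U : Uad U ->
  Uad (fun g => expCmat (ah g) (bh g) *m U g).
Proof. by move=> hU g; apply/Uad_ptP/moment_posdef_expC/Uad_ptP. Qed.

Variables (xg yg : G -> R) (W : R -> R -> R -> R).

Lemma Uad_applyExpC t tau U : Uad U -> Uad (applyExpC xg yg W t tau U).
Proof. exact: Uad_expCmat. Qed.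

Lemma Uad_applyExpCneg t tau U : Uad U -> Uad (applyExpCneg xg yg W t tau U).
Proof. exact: Uad_expCmat. Qed.

End GridStates.

Theorem theorem1 (R : realType) (G : finType) (xg yg : G -> R)
    (W : R -> R -> R -> R)
    (Rh : (G -> 'cV[R]_6) -> (G -> 'cV[R]_6))
    (dtstar : (G -> 'cV[R]_6) -> R)
    (hFE : forall U : G -> 'cV[R]_6, Uad U ->
             forall dt : R, 0 < dt -> dt <= dtstar U -> Uad (euler Rh dt U))
    (tn dt : R) (Un : G -> 'cV[R]_6) :
  Uad Un -> 0 < dt ->
  dt <= dtstar Un ->
  dt <= dtstar (stage1 xg yg W Rh tn dt Un) ->
  dt <= dtstar (stage2 xg yg W Rh tn dt Un) ->
  Uad (ssprk3 xg yg W Rh tn dt Un).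
Proof.
move=> hUn dt_gt0 dt0 dt1 dt2.
have hS1 : Uad (stage1 xg yg W Rh tn dt Un).
  exact/Uad_applyExpC/hFE.
have hS2 : Uad (stage2 xg yg W Rh tn dt Un).
  apply: Uad_scale_add; [lra | lra | exact: Uad_applyExpC | ].
  exact/Uad_applyExpCneg/hFE.
apply: Uad_scale_add; [lra | lra | exact: Uad_applyExpC | ].
exact/Uad_applyExpC/hFE.
Qed.
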